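(* Let $\langle A, \leq, \otimes, \mathbf{1}\rangle$ be a finitely distributive semi-lattice monoid (respectively, a distributive complete lattice monoid), with bottom element $\bot$. For $k\geq1$ let $Lex_k(A)$, $\leq_k$, $\otimes^k$, $\mathbf{1}^k$ be defined by: $Lex_1(A) = A$, $Lex_{k+1}(A) = I(A)\, Lex_k(A) \cup C(A)\{\bot\}^k$; $\leq_1=\leq$ and for $k\geq2$, $a_1 \ldots a_k \leq_k b_1 \ldots b_k$ iff $a_1 < b_1$, or $a_1 = b_1$ and $a_2 \ldots a_k \leq_{k-1} b_2 \ldots b_k$; $\otimes^k$ is componentwise and $\mathbf{1}^k=\mathbf{1}\ldots\mathbf{1}$. Then for every $k\geq1$, $\langle Lex_k(A), \leq_k, \otimes^k, \mathbf{1}^k\rangle$ is a finitely distributive semi-lattice monoid (respectively, a distributive complete lattice monoid).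
   Context: A semi-lattice monoid (SLM) is $\langle A,\leq,\otimes,\mathbf{1}\rangle$ where $\langle A,\otimes,\mathbf{1}\rangle$ is a commutative monoid and $\langle A,\leq\rangle$ is a partial order in which every finite subset (including $\emptyset$, whose LUB is the bottom $\bot$) has a least upper bound $\bigvee X$; a complete lattice monoid (CLM) is the same with every subset having a LUB. An SLM is finitely distributive if $a\otimes\bigvee X=\bigvee\{a\otimes x\mid x\in X\}$ for all $a\in A$ and finite $X\subseteq A$; a CLM is distributive if this holds for all $X\subseteq A$. $a<b$ means $a\leq b$, $a\neq b$. $I(A) = \{c \in A \mid \forall a,b \in A.\ a \otimes c = b \otimes c \Rightarrow a = b\}$, $C(A)=A\setminus I(A)$. For sets of sequences, $XY$ denotes concatenations, and $\{\bot\}^k$ is the singleton of the sequence of $k$ copies of $\bot$. *)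

From Stdlib Require Import List.
Import ListNotations.
Set Implicit Arguments.

Section Defs.
Variable T : Type.

Definition is_lub (P : T -> Prop) (le : T -> T -> Prop) (X : T -> Prop) (l : T) : Prop :=
  P l /\ (forall x, X x -> le x l) /\
  (forall u, P u -> (forall x, X x -> le x u) -> le l u).

Record is_po_monoid (P : T -> Prop) (le : T -> T -> Prop) (mul : T -> T -> T) (one : T) : Prop := {
  le_refl : forall a, P a -> le a a;
  le_antisym : forall a b, P a -> P b -> le a b -> le b a -> a = b;
  le_trans : forall a b c, P a -> P b -> P c -> le a b -> le b c -> le a c;
  mul_closed : forall a b, P a -> P b -> P (mul a b);
  one_in : P one;
  mul_assoc : forall a b c, P a -> P b -> P c -> mul a (mul b c) = mul (mul a b) c;
  mul_comm : forall a b, P a -> P b -> mul a b = mul b a;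
  mul_one : forall a, P a -> mul a one = a
}.

(* finitely distributive semi-lattice monoid; finite subsets are given by lists *)
Definition is_fd_SLM (P : T -> Prop) le mul one : Prop :=
  is_po_monoid P le mul one /\
  (forall xs : list T, (forall x, In x xs -> P x) ->
     exists l, is_lub P le (fun x => In x xs) l) /\
  (forall a, P a -> forall xs : list T, (forall x, In x xs -> P x) ->
     forall l, is_lub P le (fun x => In x xs) l ->
       is_lub P le (fun y => In y (map (mul a) xs)) (mul a l)).

Definition is_d_CLM (P : T -> Prop) le mul one : Prop :=
  is_po_monoid P le mul one /\
  (forall X : T -> Prop, (forall x, X x -> P x) -> exists l, is_lub P le X l) /\
  (forall a, P a -> forall X : T -> Prop, (forall x, X x -> P x) ->
     forall l, is_lub P le X l ->
       is_lub P le (fun y => exists x, X x /\ y = mul a x) (mul a l)).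
End Defs.

Section Lex.
Variables (A : Type) (le : A -> A -> Prop) (mul : A -> A -> A) (one bot : A).

Definition lt (a b : A) : Prop := le a b /\ a <> b.

(* I(A): cancellable elements; C(A) its complement *)
Definition Icanc (c : A) : Prop := forall a b, mul a c = mul b c -> a = b.

Fixpoint Lex (k : nat) : list A -> Prop :=
  match k with
  | 0 => fun _ => False
  | S k' =>
    match k' with
    | 0 => fun s => exists a, s = [a]
    | _ => fun s =>
        (exists a t, s = a :: t /\ Icanc a /\ Lex k' t) \/
        (exists c, s = c :: repeat bot k' /\ ~ Icanc c)
    end
  end.

Fixpoint lexle (k : nat) (s t : list A) : Prop :=
  match k with
  | 0 => True
  | S k' =>
    match s, t with
    | a :: s', b :: t' =>
      match k' with
      | 0 => le a b
      | _ => lt a b \/ (a = b /\ lexle k' s' t')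
      end
    | _, _ => False
    end
  end.

Fixpoint lmul (s t : list A) : list A :=
  match s, t with
  | a :: s', b :: t' => mul a b :: lmul s' t'
  | _, _ => []
  end.

End Lex.

From Stdlib Require Import List Classical ClassicalEpsilon.
Import ListNotations.
Set Implicit Arguments.

(* Lex_(k+1)(A) is a one-step lexicographic extension of Lex_k(A): sequences
   a :: t with t in Lex_k(A), where t is forced to be the bottom z when a is
   not cancellable; and Lex_1(A) is the same extension of the one-point monoid.
   So it suffices that one extension step preserves the structure.  The lub of
   a family X is m :: w, where m is the lub of the heads of X, and w is the lub
   of the tails of the members with head m if m is cancellable, and z
   otherwise.  For distributivity, the heads of c X have lub c m; c m is
   cancellable iff c and m are, and when c is cancellable the members of c X
   with head c m are exactly c times the members of X with head m.  In the
   remaining cases the new tail is z, because z is the lub of the empty family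
   and hence absorbing.  Finite and arbitrary families are treated at once:
   the argument only uses that the admissible families are closed under
   images and restrictions and contain the empty family. *)

Definition finite_set {T : Type} (X : T -> Prop) : Prop :=
  exists xs : list T, forall x, X x <-> In x xs.

Definition any_set {T : Type} (X : T -> Prop) : Prop := True.

Definition image {T U : Type} (f : T -> U) (X : T -> Prop) : U -> Prop :=
  fun y => exists x, X x /\ y = f x.

Record subset_class (F : forall T : Type, (T -> Prop) -> Prop) : Prop := {
  class_image : forall T U (f : T -> U) X, F T X -> F U (image f X);
  class_restrict : forall T X (Q : T -> Prop), F T X -> F T (fun x => X x /\ Q x);
  class_empty : forall T, F T (fun _ => False)
}.

Definition lub_monoid (F : forall T : Type, (T -> Prop) -> Prop) {T : Type}
  (P : T -> Prop) (le : T -> T -> Prop) (mul : T -> T -> T) (one : T) : Prop :=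
  is_po_monoid P le mul one /\
  (forall X, F T X -> (forall x, X x -> P x) -> exists l, is_lub P le X l) /\
  (forall a, P a -> forall X, F T X -> (forall x, X x -> P x) ->
     forall l, is_lub P le X l -> is_lub P le (image (mul a) X) (mul a l)).

Lemma finite_set_class : subset_class (@finite_set).
Proof.
  split.
  - intros T U f X [xs Hxs]. exists (map f xs). intros y. rewrite in_map_iff.
    split.
    + intros [x [Hx ->]]. exists x. split; [reflexivity | apply Hxs; exact Hx].
    + intros [x [<- Hx]]. exists x. split; [apply Hxs; exact Hx | reflexivity].
  - intros T X Q [xs Hxs].
    exists (filter (fun x => if excluded_middle_informative (Q x) then true else false)
                   xs).
    intros x. rewrite filter_In, <- Hxs.
    destruct (excluded_middle_informative (Q x)); intuition discriminate.
  - intros T. exists []. simpl. tauto.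
Qed.

Lemma any_set_class : subset_class (@any_set).
Proof. split; unfold any_set; trivial. Qed.

Section Lubs.
Variables (T : Type) (P : T -> Prop) (le : T -> T -> Prop).

Lemma is_lub_ext X Y l :
  (forall x, X x <-> Y x) -> is_lub P le X l -> is_lub P le Y l.
Proof.
  intros HXY [Pl [ub least]]. split; [exact Pl | split].
  - intros x Hx. apply ub, HXY, Hx.
  - intros u Pu Hu. apply least; [exact Pu |]. intros x Hx. apply Hu, HXY, Hx.
Qed.

Lemma is_lub_unique (mul : T -> T -> T) one X l1 l2 :
  is_po_monoid P le mul one -> is_lub P le X l1 -> is_lub P le X l2 -> l1 = l2.
Proof.
  intros po [P1 [ub1 least1]] [P2 [ub2 least2]].
  apply (le_antisym po); auto.
Qed.

Lemma mul_lub_empty F (mul : T -> T -> T) one z t :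
  subset_class F -> lub_monoid F P le mul one ->
  is_lub P le (fun _ => False) z -> P t -> mul t z = z.
Proof.
  intros HF [po [_ distr]] Hz Pt.
  apply is_lub_unique with mul one (fun _ => False); [exact po | | exact Hz].
  apply is_lub_ext with (image (mul t) (fun _ => False)).
  - intros x. split; [intros [y [[] _]] | contradiction].
  - apply distr; [exact Pt | apply (class_empty HF) | contradiction | exact Hz].
Qed.

End Lubs.

Lemma is_lub_equiv T (P Q : T -> Prop) (le le2 : T -> T -> Prop) X l :
  (forall s, P s <-> Q s) -> (forall s t, P s -> P t -> le s t <-> le2 s t) ->
  (forall x, X x -> P x) -> is_lub P le X l -> is_lub Q le2 X l.
Proof.
  intros HPQ Hle HX [Pl [ub least]]. split; [apply HPQ, Pl | split].
  - intros x Hx. apply Hle; auto.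
  - intros u Qu Hu. apply HPQ in Qu. apply Hle, least; auto.
    intros x Hx. apply Hle; auto.
Qed.

Lemma po_monoid_equiv T (P Q : T -> Prop) (le le2 : T -> T -> Prop) mul one :
  is_po_monoid P le mul one ->
  (forall s, P s <-> Q s) -> (forall s t, P s -> P t -> le s t <-> le2 s t) ->
  is_po_monoid Q le2 mul one.
Proof.
  intros po HPQ Hle.
  assert (HQ : forall s, Q s -> P s) by (intros s; apply HPQ).
  split; intros; repeat match goal with H : Q _ |- _ => apply HQ in H end.
  - apply Hle, (le_refl po); auto.
  - apply (le_antisym po); auto; apply Hle; auto.
  - apply Hle, (le_trans po) with b; auto; apply Hle; auto.
  - apply HPQ, (mul_closed po); auto.
  - apply HPQ, (one_in po).
  - apply (mul_assoc po); auto.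
  - apply (mul_comm po); auto.
  - apply (mul_one po); auto.
Qed.

Lemma lub_monoid_equiv T F (P Q : T -> Prop) (le le2 : T -> T -> Prop) mul one :
  lub_monoid F P le mul one ->
  (forall s, P s <-> Q s) -> (forall s t, P s -> P t -> le s t <-> le2 s t) ->
  lub_monoid F Q le2 mul one.
Proof.
  intros [po [lubs distr]] HPQ Hle.
  assert (HQP : forall s, Q s <-> P s) by (intros s; symmetry; apply HPQ).
  assert (Hle2 : forall s t, Q s -> Q t -> le2 s t <-> le s t).
  { intros s t Qs Qt. symmetry. apply Hle; apply HPQ; assumption. }
  assert (HXP : forall X : T -> Prop, (forall x, X x -> Q x) -> forall x, X x -> P x).
  { intros X HX x Hx. apply HQP, HX, Hx. }
  split; [apply po_monoid_equiv with P le; assumption | split].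
  - intros X FX HX. destruct (lubs X FX (HXP X HX)) as [l Hl].
    exists l. exact (is_lub_equiv _ _ HPQ Hle (HXP X HX) Hl).
  - intros a Qa X FX HX l Hl. apply HQP in Qa.
    apply (is_lub_equiv _ _ HPQ Hle).
    + intros y [x [Hx ->]]. apply (mul_closed po); [exact Qa | exact (HXP X HX x Hx)].
    + exact (distr a Qa X FX (HXP X HX) l (is_lub_equiv _ _ HQP Hle2 HX Hl)).
Qed.

Lemma lub_monoid_finite_iff T (P : T -> Prop) le mul one :
  lub_monoid (@finite_set) P le mul one <-> is_fd_SLM P le mul one.
Proof.
  assert (Himage : forall a (xs : list T) y,
             image (mul a) (fun x => In x xs) y <-> In y (map (mul a) xs)).
  { intros a xs y. unfold image. rewrite in_map_iff.
    split; intros [x [H1 H2]]; exists x; auto. }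
  split; intros [po [lubs distr]]; split; [exact po | split | exact po | split].
  - intros xs Hxs. apply lubs; [exists xs; tauto | exact Hxs].
  - intros a Pa xs Hxs l Hl. eapply is_lub_ext; [apply Himage |].
    apply distr; [exact Pa | exists xs; tauto | exact Hxs | exact Hl].
  - intros X [xs Hxs] HX. destruct (lubs xs) as [l Hl].
    + intros x Hx. apply HX, Hxs, Hx.
    + exists l. eapply is_lub_ext; [| exact Hl]. intros x. symmetry. apply Hxs.
  - intros a Pa X [xs Hxs] HX l Hl.
    assert (HXxs : forall y, image (mul a) (fun x => In x xs) y <-> image (mul a) X y).
    { intros y. unfold image. split; intros [x [Hx ->]]; exists x; split;
        solve [reflexivity | apply Hxs; exact Hx]. }
    eapply is_lub_ext; [apply HXxs |].
    eapply is_lub_ext; [intros y; symmetry; apply Himage |].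
    apply distr; [exact Pa | intros x Hx; apply HX, Hxs, Hx |].
    eapply is_lub_ext; [apply Hxs | exact Hl].
Qed.

Lemma lub_monoid_any_iff T (P : T -> Prop) le mul one :
  lub_monoid (@any_set) P le mul one <-> is_d_CLM P le mul one.
Proof.
  unfold lub_monoid, is_d_CLM, any_set, image.
  split; intros [po [lubs distr]]; split; auto.
Qed.

Section Cancellable.
Variables (A : Type) (le : A -> A -> Prop) (mul : A -> A -> A) (one : A).
Hypothesis po : is_po_monoid (fun _ : A => True) le mul one.

Lemma Icanc_mul_iff a b : Icanc mul (mul a b) <-> Icanc mul a /\ Icanc mul b.
Proof.
  split.
  - intros Hab. split.
    + intros x y Hxy. apply Hab.
      rewrite !(mul_assoc po), Hxy; trivial.
    + intros x y Hxy. apply Hab.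
      rewrite (mul_comm po a b), !(mul_assoc po), Hxy; trivial.
  - intros [Ha Hb] x y Hxy. apply Ha, Hb.
    rewrite <- !(mul_assoc po); trivial.
Qed.

Lemma Icanc_one : Icanc mul one.
Proof. intros x y Hxy. rewrite !(mul_one po) in Hxy; trivial. Qed.

End Cancellable.

Section LexExtension.
Variables (A : Type) (le : A -> A -> Prop) (mul : A -> A -> A) (one : A).
Variable F : forall T : Type, (T -> Prop) -> Prop.
Hypothesis HF : subset_class F.
Hypothesis HA : lub_monoid F (fun _ : A => True) le mul one.
Variables (P : list A -> Prop) (leP : list A -> list A -> Prop) (oneP z : list A).
Hypothesis HP : lub_monoid F P leP (lmul mul) oneP.
Hypothesis Hz : is_lub P leP (fun _ => False) z.

Definition lex_carrier (s : list A) : Prop :=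
  (exists a t, s = a :: t /\ Icanc mul a /\ P t) \/
  (exists c, s = c :: z /\ ~ Icanc mul c).

Definition lex_le (s t : list A) : Prop :=
  match s, t with
  | a :: s', b :: t' => lt le a b \/ (a = b /\ leP s' t')
  | _, _ => False
  end.

Let poA : is_po_monoid (fun _ : A => True) le mul one := proj1 HA.
Let poP : is_po_monoid P leP (lmul mul) oneP := proj1 HP.
Let P_z : P z := proj1 Hz.

Lemma lmul_bottom t : P t -> lmul mul t z = z /\ lmul mul z t = z.
Proof.
  intros Pt. assert (Htz : lmul mul t z = z) by exact (mul_lub_empty _ HF HP Hz Pt).
  split; [exact Htz |]. rewrite (mul_comm poP); assumption.
Qed.

Lemma lex_carrier_inv s :
  lex_carrier s -> exists a t, s = a :: t /\ P t /\ (~ Icanc mul a -> t = z).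
Proof.
  intros [[a [t [-> [Ia Pt]]]] | [c [-> Nc]]].
  - exists a, t. repeat split; [exact Pt | contradiction].
  - exists c, z. repeat split. exact P_z.
Qed.

Lemma lex_carrier_cons a t : P t -> (~ Icanc mul a -> t = z) -> lex_carrier (a :: t).
Proof.
  intros Pt Ha. destruct (classic (Icanc mul a)) as [Ia | Na].
  - left. exists a, t. auto.
  - right. exists a. rewrite (Ha Na). auto.
Qed.

Lemma lex_le_head a s b t : lex_le (a :: s) (b :: t) -> le a b.
Proof. intros [[Hab _] | [-> _]]; [exact Hab | apply (le_refl poA); trivial]. Qed.

Lemma lex_le_cons a s b t : le a b -> (a = b -> leP s t) -> lex_le (a :: s) (b :: t).
Proof.
  intros Hab Hst. destruct (classic (a = b)) as [Eab | Nab].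
  - right. auto.
  - left. split; assumption.
Qed.

Lemma lex_carrier_lmul s t :
  lex_carrier s -> lex_carrier t -> lex_carrier (lmul mul s t).
Proof.
  intros Hs Ht. destruct (lex_carrier_inv Hs) as [a [s' [-> [Ps' Ha]]]].
  destruct (lex_carrier_inv Ht) as [b [t' [-> [Pt' Hb]]]].
  apply lex_carrier_cons; [apply (mul_closed poP); assumption |].
  intros Nab. destruct (classic (Icanc mul a)) as [Ia | Na].
  - assert (Nb : ~ Icanc mul b)
      by (intros Ib; apply Nab, (Icanc_mul_iff poA); auto).
    rewrite (Hb Nb). apply lmul_bottom, Ps'.
  - rewrite (Ha Na). apply lmul_bottom, Pt'.
Qed.

Lemma lex_po_monoid : is_po_monoid lex_carrier lex_le (lmul mul) (one :: oneP).
Proof.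
  split.
  - intros s Hs. destruct (lex_carrier_inv Hs) as [a [t [-> [Pt _]]]].
    right. split; [reflexivity | apply (le_refl poP), Pt].
  - intros s t Hs Ht. destruct (lex_carrier_inv Hs) as [a [s' [-> [Ps' _]]]].
    destruct (lex_carrier_inv Ht) as [b [t' [-> [Pt' _]]]].
    intros [[Hab Nab] | [<- Hst]] [[Hba Nba] | [Eba Hts]]; try congruence.
    + exfalso. apply Nab, (le_antisym poA); trivial.
    + f_equal. apply (le_antisym poP); assumption.
  - intros s t u Hs Ht Hu. destruct (lex_carrier_inv Hs) as [a [s' [-> [Ps' _]]]].
    destruct (lex_carrier_inv Ht) as [b [t' [-> [Pt' _]]]].
    destruct (lex_carrier_inv Hu) as [c [u' [-> [Pu' _]]]].
    intros [[Hab Nab] | [<- Hst]] [[Hbc Nbc] | [<- Htu]].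
    + left. split; [apply (le_trans poA) with b; trivial |].
      intros <-. apply Nab, (le_antisym poA); trivial.
    + left. split; assumption.
    + left. split; assumption.
    + right. split; [reflexivity | apply (le_trans poP) with t'; assumption].
  - exact lex_carrier_lmul.
  - apply lex_carrier_cons; [apply (one_in poP) |].
    intros N. contradiction (N (Icanc_one poA)).
  - intros s t u Hs Ht Hu. destruct (lex_carrier_inv Hs) as [a [s' [-> [Ps' _]]]].
    destruct (lex_carrier_inv Ht) as [b [t' [-> [Pt' _]]]].
    destruct (lex_carrier_inv Hu) as [c [u' [-> [Pu' _]]]].
    simpl. f_equal; [apply (mul_assoc poA) | apply (mul_assoc poP)]; trivial.
  - intros s t Hs Ht. destruct (lex_carrier_inv Hs) as [a [s' [-> [Ps' _]]]].
    destruct (lex_carrier_inv Ht) as [b [t' [-> [Pt' _]]]].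
    simpl. f_equal; [apply (mul_comm poA) | apply (mul_comm poP)]; trivial.
  - intros s Hs. destruct (lex_carrier_inv Hs) as [a [s' [-> [Ps' _]]]].
    simpl. f_equal; [apply (mul_one poA) | apply (mul_one poP)]; trivial.
Qed.

Definition heads (X : list A -> Prop) : A -> Prop := image (hd one) X.

Definition tails (X : list A -> Prop) (m : A) : list A -> Prop :=
  image (@tl A) (fun s => X s /\ hd one s = m).

Definition lex_tail (X : list A -> Prop) (m : A) (w : list A) : Prop :=
  (Icanc mul m -> is_lub P leP (tails X m) w) /\ (~ Icanc mul m -> w = z).

Lemma tails_in X m :
  (forall x, X x -> lex_carrier x) -> forall t, tails X m t -> P t.
Proof.
  intros HX t [x [[Hx _] ->]].
  destruct (lex_carrier_inv (HX x Hx)) as [a [t' [-> [Pt' _]]]]. exact Pt'.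
Qed.

Lemma lex_tail_in X m w : lex_tail X m w -> P w.
Proof.
  intros [Hcanc Hnc]. destruct (classic (Icanc mul m)) as [Im | Nm].
  - apply (Hcanc Im).
  - rewrite (Hnc Nm). exact P_z.
Qed.

Lemma lex_tail_exists X m :
  F X -> (forall x, X x -> lex_carrier x) -> exists w, lex_tail X m w.
Proof.
  intros FX HX. destruct (classic (Icanc mul m)) as [Im | Nm].
  - destruct (proj1 (proj2 HP) (tails X m)) as [w Hw].
    + apply (class_image HF), (class_restrict HF), FX.
    + apply tails_in, HX.
    + exists w. split; [intros _; exact Hw | contradiction].
  - exists z. split; [contradiction | reflexivity].
Qed.

Lemma lex_is_lub X m w :
  (forall x, X x -> lex_carrier x) -> is_lub (fun _ => True) le (heads X) m ->
  lex_tail X m w -> is_lub lex_carrier lex_le X (m :: w).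
Proof.
  intros HX [_ [m_ub m_least]] Hw. pose proof Hw as [Hcanc Hnc].
  assert (Pw : P w) by (apply lex_tail_in with X m; exact Hw).
  split; [apply lex_carrier_cons; assumption | split].
  - intros x Hx. destruct (lex_carrier_inv (HX x Hx)) as [a [t [-> [Pt Ha]]]].
    apply lex_le_cons; [apply m_ub; exists (a :: t); auto | intros ->].
    destruct (classic (Icanc mul m)) as [Im | Nm].
    + apply (Hcanc Im). exists (m :: t). auto.
    + rewrite (Ha Nm), (Hnc Nm). apply (le_refl poP), P_z.
  - intros u Hu u_ub. destruct (lex_carrier_inv Hu) as [b [v [-> [Pv Hb]]]].
    assert (Hmb : le m b).
    { apply m_least; [trivial |]. intros a [x [Hx ->]].
      destruct (lex_carrier_inv (HX x Hx)) as [a' [t [-> _]]].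
      exact (lex_le_head (u_ub _ Hx)). }
    apply lex_le_cons; [exact Hmb | intros <-].
    destruct (classic (Icanc mul m)) as [Im | Nm].
    + apply (Hcanc Im); [exact Pv |]. intros t [x [[Hx Hhd] ->]].
      destruct (lex_carrier_inv (HX x Hx)) as [a [t' [-> _]]].
      simpl in Hhd |- *. subst a.
      destruct (u_ub _ Hx) as [[_ Nmm] | [_ Ht'v]]; [contradiction | exact Ht'v].
    + rewrite (Hnc Nm), (Hb Nm). apply (le_refl poP), P_z.
Qed.

Lemma lex_lub_exists X :
  F X -> (forall x, X x -> lex_carrier x) -> exists l, is_lub lex_carrier lex_le X l.
Proof.
  intros FX HX. destruct (proj1 (proj2 HA) (heads X)) as [m Hm].
  - apply (class_image HF), FX.
  - trivial.
  - destruct (lex_tail_exists m FX HX) as [w Hw].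
    exists (m :: w). apply lex_is_lub; assumption.
Qed.

Lemma lex_bottom bot :
  is_lub (fun _ => True) le (fun _ => False) bot ->
  is_lub lex_carrier lex_le (fun _ => False) (bot :: z).
Proof.
  intros Hbot. apply lex_is_lub; [contradiction | |].
  - eapply is_lub_ext; [| exact Hbot].
    intros a. split; [contradiction | intros [x [[] _]]].
  - split; [| reflexivity]. intros _. eapply is_lub_ext; [| exact Hz].
    intros t. split; [contradiction | intros [x [[[] _] _]]].
Qed.

Lemma heads_image c r X :
  (forall x, X x -> lex_carrier x) ->
  forall a, image (mul c) (heads X) a <-> heads (image (lmul mul (c :: r)) X) a.
Proof.
  intros HX a. split.
  - intros [b [[x [Hx ->]] ->]].
    destruct (lex_carrier_inv (HX x Hx)) as [b [t [-> _]]].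
    exists (lmul mul (c :: r) (b :: t)). split; [exists (b :: t); auto | reflexivity].
  - intros [s [[x [Hx ->]] ->]].
    destruct (lex_carrier_inv (HX x Hx)) as [b [t [-> _]]].
    exists b. split; [exists (b :: t); auto | reflexivity].
Qed.

Lemma tails_image c r X m :
  Icanc mul c -> (forall x, X x -> lex_carrier x) ->
  forall t, image (lmul mul r) (tails X m) t <->
            tails (image (lmul mul (c :: r)) X) (mul c m) t.
Proof.
  intros Ic HX t. split.
  - intros [t' [[x [[Hx Hhd] ->]] ->]].
    destruct (lex_carrier_inv (HX x Hx)) as [b [t [-> _]]]. simpl in Hhd. subst b.
    exists (lmul mul (c :: r) (m :: t)). split; [| reflexivity].
    split; [exists (m :: t); auto | reflexivity].
  - intros [s [[[x [Hx ->]] Hhd] ->]].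
    destruct (lex_carrier_inv (HX x Hx)) as [b [t' [-> _]]]. simpl in Hhd.
    assert (Ebm : b = m).
    { apply Ic. rewrite (mul_comm poA b), (mul_comm poA m); trivial. }
    subst b. exists t'. split; [exists (m :: t'); auto | reflexivity].
Qed.

Lemma lex_tail_mul c r X m w :
  P r -> (~ Icanc mul c -> r = z) ->
  F X -> (forall x, X x -> lex_carrier x) -> lex_tail X m w ->
  lex_tail (image (lmul mul (c :: r)) X) (mul c m) (lmul mul r w).
Proof.
  intros Pr Hc FX HX Hw. pose proof Hw as [Hcanc Hnc]. split.
  - intros Icm. apply (Icanc_mul_iff poA) in Icm as [Ic Im].
    eapply is_lub_ext; [apply tails_image; assumption |].
    apply (proj2 (proj2 HP)); [exact Pr | | apply tails_in, HX | exact (Hcanc Im)].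
    apply (class_image HF), (class_restrict HF), FX.
  - intros Ncm. destruct (classic (Icanc mul c)) as [Ic | Nc].
    + assert (Nm : ~ Icanc mul m) by (intros Im; apply Ncm, (Icanc_mul_iff poA); auto).
      rewrite (Hnc Nm). apply lmul_bottom, Pr.
    + rewrite (Hc Nc). apply lmul_bottom. apply lex_tail_in with X m. exact Hw.
Qed.

Lemma lex_mul_lub s X l :
  lex_carrier s -> F X -> (forall x, X x -> lex_carrier x) ->
  is_lub lex_carrier lex_le X l ->
  is_lub lex_carrier lex_le (image (lmul mul s) X) (lmul mul s l).
Proof.
  intros Hs FX HX Hl. destruct (lex_carrier_inv Hs) as [c [r [-> [Pr Hc]]]].
  pose proof HA as [_ [lubsA distrA]].
  destruct (lubsA (heads X)) as [m Hm]; [apply (class_image HF), FX | trivial |].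
  destruct (lex_tail_exists m FX HX) as [w Hw].
  assert (El : l = m :: w).
  { apply is_lub_unique with lex_carrier lex_le (lmul mul) (one :: oneP) X;
      [exact lex_po_monoid | exact Hl | apply lex_is_lub; assumption]. }
  subst l. apply lex_is_lub.
  - intros y [x [Hx ->]]. apply (mul_closed lex_po_monoid); auto.
  - eapply is_lub_ext; [apply heads_image; exact HX |].
    apply distrA; [trivial | apply (class_image HF), FX | trivial | exact Hm].
  - apply lex_tail_mul; assumption.
Qed.

Lemma lex_lub_monoid : lub_monoid F lex_carrier lex_le (lmul mul) (one :: oneP).
Proof.
  split; [exact lex_po_monoid | split].
  - exact lex_lub_exists.
  - intros s Hs X FX HX l Hl. apply lex_mul_lub; assumption.
Qed.

End LexExtension.

Section OnePoint.
Variables (A : Type) (le : A -> A -> Prop) (mul : A -> A -> A).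

Lemma nil_is_lub (X : list A -> Prop) :
  is_lub (fun s => s = []) (fun _ _ => True) X [].
Proof. split; [reflexivity | split; trivial]. Qed.

Lemma nil_lub_monoid F :
  lub_monoid F (fun s : list A => s = []) (fun _ _ => True) (lmul mul) [].
Proof.
  split; [| split].
  - split; intros; subst; trivial.
  - intros X _ _. exists []. apply nil_is_lub.
  - intros a -> X _ _ l _. apply nil_is_lub.
Qed.

Lemma Lex_one_iff bot s : lex_carrier mul (fun t => t = []) [] s <-> Lex mul bot 1 s.
Proof.
  split.
  - intros [[a [t [-> [_ ->]]]] | [c [-> _]]]; eexists; reflexivity.
  - intros [a ->]. destruct (classic (Icanc mul a)) as [Ia | Na].
    + left. exists a, []. auto.
    + right. exists a. auto.
Qed.

Lemma lex_le_nil_iff a b :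
  (forall x, le x x) -> lex_le le (fun _ _ => True) [a] [b] <-> le a b.
Proof.
  intros le_refl. split.
  - intros [[Hab _] | [-> _]]; trivial.
  - intros Hab. apply lex_le_cons; trivial.
Qed.

End OnePoint.

Lemma Lex_lub_monoid A (le : A -> A -> Prop) mul one bot F :
  subset_class F -> lub_monoid F (fun _ : A => True) le mul one ->
  is_lub (fun _ : A => True) le (fun _ => False) bot ->
  forall n,
    lub_monoid F (Lex mul bot (S n)) (lexle le (S n)) (lmul mul) (repeat one (S n)) /\
    is_lub (Lex mul bot (S n)) (lexle le (S n)) (fun _ => False) (repeat bot (S n)).
Proof.
  intros HF HA Hbot n. induction n as [| n [IH IHbot]].
  - assert (Hle : forall s t, lex_carrier mul (fun t => t = []) [] s ->
                    lex_carrier mul (fun t => t = []) [] t ->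
                    lex_le le (fun _ _ => True) s t <-> lexle le 1 s t).
    { intros s t Hs Ht. apply (Lex_one_iff mul bot) in Hs as [a ->].
      apply (Lex_one_iff mul bot) in Ht as [b ->].
      apply lex_le_nil_iff. intros x. apply (le_refl (proj1 HA)); trivial. }
    pose proof (nil_lub_monoid mul F) as Hnil.
    split.
    + apply lub_monoid_equiv with (lex_carrier mul (fun t => t = []) [])
                                  (lex_le le (fun _ _ => True)).
      * exact (lex_lub_monoid HF HA Hnil (nil_is_lub _)).
      * apply Lex_one_iff.
      * exact Hle.
    + apply (is_lub_equiv _ _ (Lex_one_iff mul bot) Hle); [contradiction |].
      exact (lex_bottom HA Hnil (nil_is_lub _) Hbot).
  - (* Lex (S (S n)) and lexle (S (S n)) unfold to the extension of Lex (S n). *)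
    split; [exact (lex_lub_monoid HF HA IH IHbot) | exact (lex_bottom HA IH IHbot Hbot)].
Qed.

Theorem theorem1 (A : Type) (le : A -> A -> Prop) (mul : A -> A -> A) (one bot : A)
  (Hbot : is_lub (fun _ : A => True) le (fun _ : A => False) bot) :
  (is_fd_SLM (fun _ : A => True) le mul one ->
     forall k : nat, 1 <= k ->
       is_fd_SLM (Lex mul bot k) (lexle le k) (lmul mul) (repeat one k)) /\
  (is_d_CLM (fun _ : A => True) le mul one ->
     forall k : nat, 1 <= k ->
       is_d_CLM (Lex mul bot k) (lexle le k) (lmul mul) (repeat one k)).
Proof.
  split; intros HA [| n] Hk; try solve [inversion Hk].
  - apply lub_monoid_finite_iff, Lex_lub_monoid;
      [exact finite_set_class | apply lub_monoid_finite_iff, HA | exact Hbot].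
  - apply lub_monoid_any_iff, Lex_lub_monoid;
      [exact any_set_class | apply lub_monoid_any_iff, HA | exact Hbot].
Qed.
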